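(* Let $\rho$ satisfy (A1) and let $a>0$, $b>0$ satisfy $a,b\notin\Lambda(L)$, $\rho_1<a<b^+-b$ and $(a,b)\cap\Lambda(L)\neq\emptyset$. Then there exist $\gamma_1,\gamma_2>0$ such that $$\langle(L-a-b)u,u\rangle\le-\gamma_1\|u\|_E^2\quad\forall u\in E_1\oplus E_2,\qquad \langle(L-a-b)u,u\rangle\ge\gamma_2\|u\|_E^2\quad\forall u\in E_3.$$
   Context: $T=2\pi p/q$ ($p,q$ coprime positive integers), $\Omega=(0,T)\times(0,\pi)$, $L^2(\Omega)$ weighted by $\rho$. (A1): $\rho\in H^2(0,\pi)$, $\rho>0$ on $[0,\pi]$, $\rho_0:=\operatorname{ess\,inf}\eta_\rho>0$ with $\eta_\rho=\frac12\rho''/\rho-\frac14(\rho'/\rho)^2$; $\rho_1=\frac2\pi\int_0^\pi\eta_\rho$. $L$ is the self-adjoint extension in $L^2(\Omega)$ of $\rho^{-1}(\rho\psi_{tt}-(\rho\psi_x)_x)$ (Dirichlet in $x$, $T$-periodic in $t$), with orthonormal eigenbasis $\phi_m(t)\varphi_n(x)$, $\phi_m=T^{-1/2}e^{i2m\pi t/T}$, $\varphi_n$ the Dirichlet eigenfunctions of $-(\rho\varphi')'=\lambda_n^2\rho\varphi$, eigenvalues $\lambda_{nm}=\lambda_n^2-(2m\pi/T)^2$, $\Lambda(L)=\{\lambda_{nm}\}$; $b^+=\min\{\lambda\in\Lambda(L):\lambda>b\}$. For $u\in L^2(\Omega)$ let $\alpha_{nm}=\int_\Omega u\varphi_n\bar\phi_m\rho$.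 $E=\{u:\|u\|_E^2=\sum|\lambda_{nm}-a||\alpha_{nm}|^2<\infty\}$; $\langle(L-a-b)u,u\rangle=\sum(\lambda_{nm}-a-b)|\alpha_{nm}|^2$. $E_1,E_2,E_3$ are the closed subspaces of $E$ spanned by the $\phi_m\varphi_n$ with $\lambda_{nm}<a$, $a<\lambda_{nm}<b$, $\lambda_{nm}>b$ respectively. *)

From HB Require Import structures.
From mathcomp Require Import all_boot all_order all_algebra.
From mathcomp Require Import all_classical all_reals all_analysis.
Set Implicit Arguments. Unset Strict Implicit. Unset Printing Implicit Defensive.
Import Order.TTheory GRing.Theory Num.Theory.
Import numFieldNormedType.Exports.
Local Open Scope classical_set_scope.
Local Open Scope ring_scope.

Section Defs.
Variable R : realType.
Local Notation leb := (@lebesgue_measure R).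

Definition Tper (p q : nat) : R := 2 * pi * p%:R / q%:R.

Definition I0pi : set R := `]0, pi[.
Definition Omega (T : R) : set (R * R) := `]0, T[ `*` `]0, pi[.
Definition leb2 := (leb \x leb)%E.

(* rho in H^2(0,pi), with rho' = d on (0,pi) and rho'' = g (an L^2(0,pi)
   function, d being an antiderivative of g, i.e. d absolutely continuous) *)
Definition H2_rep (rho d g : R -> R) : Prop :=
  {within `[0, pi], continuous rho} /\
  (forall x, x \in `]0, pi[ -> is_derive x 1 rho (d x)) /\
  measurable_fun `]0, pi[ g /\
  (\int[leb]_(x in I0pi) ((g x) ^+ 2)%:E < +oo)%E /\
  exists c, forall x, x \in `]0, pi[ -> d x = c + Rintegral leb `]0, x[ g.

Definition eta_rho (rho d g : R -> R) (x : R) : R :=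
  g x / (2 * rho x) - (d x / rho x) ^+ 2 / 4.

(* (A1): rho in H^2(0,pi), rho > 0 on [0,pi], ess inf_{(0,pi)} eta_rho > 0
   (written out: eta_rho >= c a.e. on (0,pi) for some c > 0) *)
Definition A1 (rho d g : R -> R) : Prop :=
  H2_rep rho d g /\ (forall x, x \in `[0, pi] -> 0 < rho x) /\
  exists c, 0 < c /\ {ae leb, forall x, x \in `]0, pi[ -> c <= eta_rho rho d g x}.

Definition rho1 (rho d g : R -> R) : R :=
  2 / pi * Rintegral leb `]0, pi[ (eta_rho rho d g).

Definition SL_eigpair (rho : R -> R) (mu : R) (phi : R -> R) : Prop :=
  {within `[0, pi], continuous phi} /\ phi 0 = 0 /\ phi pi = 0 /\
  (exists x, x \in `[0, pi] /\ phi x != 0) /\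
  forall x, x \in `]0, pi[ ->
    derivable phi x 1 /\
    is_derive x 1 (fun y => rho y * derive1 phi y) (- (mu * rho x * phi x)).

(* mu n = lambda_n^2 (increasing enumeration of all Dirichlet eigenvalues),
   phi n = corresponding eigenfunction, normalized in L^2((0,pi); rho) *)
Definition Dirichlet_system (rho : R -> R) (mu : nat -> R)
    (phi : nat -> R -> R) : Prop :=
  (forall n, SL_eigpair rho (mu n) (phi n) /\
     Rintegral leb `]0, pi[ (fun x => phi n x ^+ 2 * rho x) = 1) /\
  (forall n m, (n < m)%N -> mu n < mu m) /\
  (forall nu psi, SL_eigpair rho nu psi -> exists n, nu = mu n).

Definition freq (T : R) (m : int) : R := 2 * m%:~R * pi / T.

Definition lam (mu : nat -> R) (T : R) (n : nat) (m : int) : R :=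
  mu n - freq T m ^+ 2.

Definition Lambda (mu : nat -> R) (T : R) : set R :=
  [set x | exists n m, x = lam mu T n m].

Definition next_point (S : set R) (b bp : R) : Prop :=
  S bp /\ b < bp /\ forall x, S x -> b < x -> bp <= x.

(* u = ur + i ui in L^2(Omega; rho) *)
Definition inL2 (T : R) (rho : R -> R) (ur ui : R * R -> R) : Prop :=
  measurable_fun (Omega T) ur /\ measurable_fun (Omega T) ui /\
  (\int[leb2]_(z in Omega T) ((ur z ^+ 2 + ui z ^+ 2) * rho z.2)%:E < +oo)%E.

(* alpha_{nm} = int_Omega u phi_n conj(phi_m) rho,
   phi_m(t) = T^{-1/2} e^{i 2 m pi t / T}; real and imaginary parts *)
Definition alpha_re (T : R) (rho : R -> R) (phi : nat -> R -> R)
    (ur ui : R * R -> R) (n : nat) (m : int) : R :=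
  Rintegral leb2 (Omega T) (fun z =>
    (ur z * cos (freq T m * z.1) + ui z * sin (freq T m * z.1))
      * phi n z.2 * rho z.2) / Num.sqrt T.
Definition alpha_im (T : R) (rho : R -> R) (phi : nat -> R -> R)
    (ur ui : R * R -> R) (n : nat) (m : int) : R :=
  Rintegral leb2 (Omega T) (fun z =>
    (ui z * cos (freq T m * z.1) - ur z * sin (freq T m * z.1))
      * phi n z.2 * rho z.2) / Num.sqrt T.
Definition alpha2 T rho phi ur ui n m : R :=
  alpha_re T rho phi ur ui n m ^+ 2 + alpha_im T rho phi ur ui n m ^+ 2.

Definition normE2 (mu : nat -> R) T rho phi ur ui (a : R) : \bar R :=
  \esum_(k in [set: nat * int])
     (`|lam mu T k.1 k.2 - a| * alpha2 T rho phi ur ui k.1 k.2)%:E.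

(* <(L - a - b) u, u> = sum (lambda_{nm} - a - b) |alpha_{nm}|^2, computed as
   (sum of positive parts) - (sum of negative parts) in \bar R *)
Definition formLab (mu : nat -> R) T rho phi ur ui (a b : R) : \bar R :=
  (\esum_(k in [set: nat * int])
     (Num.max ((lam mu T k.1 k.2 - a - b) * alpha2 T rho phi ur ui k.1 k.2) 0)%:E
   - \esum_(k in [set: nat * int])
     (Num.max (- ((lam mu T k.1 k.2 - a - b) * alpha2 T rho phi ur ui k.1 k.2)) 0)%:E)%E.

Definition inE mu T rho phi ur ui a : Prop :=
  inL2 T rho ur ui /\ (normE2 mu T rho phi ur ui a < +oo)%E.

(* u in E1 (+) E2: closed span of phi_m phi_n with lambda_{nm} < a or
   a < lambda_{nm} < b, i.e. (a, b not in Lambda) alpha_{nm} = 0 when lambda_{nm} > b *)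
Definition inE12 mu T rho phi ur ui a b : Prop :=
  inE mu T rho phi ur ui a /\
  forall n m, b < lam mu T n m -> alpha2 T rho phi ur ui n m = 0.
Definition inE3 mu T rho phi ur ui a b : Prop :=
  inE mu T rho phi ur ui a /\
  forall n m, lam mu T n m < b -> alpha2 T rho phi ur ui n m = 0.
End Defs.

From HB Require Import structures.
From mathcomp Require Import all_boot all_order all_algebra.
From mathcomp Require Import all_classical all_reals all_analysis.
From mathcomp Require Import lra.
Import Order.TTheory GRing.Theory Num.Theory.
Import numFieldNormedType.Exports.
Local Open Scope classical_set_scope.
Local Open Scope ring_scope.

(* Both quadratic forms are diagonal in the coefficients alpha_{nm}, so it is
   enough to compare their weights eigenvalue by eigenvalue.  On E1 (+) E2
   every eigenvalue l carrying mass satisfies l < b, and then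
   (a/b) |l - a| <= a + b - l.  On E3 it satisfies l >= b^+ > a + b, and then
   ((b^+ - a - b)/(b^+ - a)) |l - a| <= l - a - b.  Neither estimate needs
   (A1) or rho_1 < a. *)

Lemma esum_pZl (R : realType) (T : choiceType) (S : set T) (c : R)
    (h : T -> \bar R) :
  0 < c -> (forall i, (0 <= h i)%E) ->
  (\esum_(i in S) (c%:E * h i) = c%:E * \esum_(i in S) h i)%E.
Proof.
move=> c_gt0 h_ge0; rewrite /esum -ereal_sup_pZl //; congr ereal_sup.
apply/seteqP; split => x [A A_fin <-].
- by exists (\sum_(i \in A) h i)%E; [exists A | rewrite ge0_mule_fsumr].
- by case: A_fin => B B_fin <-; exists B => //; rewrite ge0_mule_fsumr.
Qed.

Section PositiveNegativeParts.
Variables (R : realType) (T : choiceType) (f : T -> R).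

Lemma esum_posneg_nonpos : (forall k, f k <= 0) ->
  (\esum_(k in [set: T]) (Num.max (f k) 0)%:E
     - \esum_(k in [set: T]) (Num.max (- f k) 0)%:E
   = - \esum_(k in [set: T]) (- f k)%:E)%E.
Proof.
move=> f_le0; rewrite esum1 ?sub0e => [|k _]; last by rewrite max_r.
by congr (- esum _ _)%E; apply/funext => k; rewrite max_l // oppr_ge0.
Qed.

Lemma esum_posneg_nonneg : (forall k, 0 <= f k) ->
  (\esum_(k in [set: T]) (Num.max (f k) 0)%:E
     - \esum_(k in [set: T]) (Num.max (- f k) 0)%:E
   = \esum_(k in [set: T]) (f k)%:E)%E.
Proof.
move=> f_ge0; rewrite [X in (_ - X)%E]esum1 ?sube0 => [|k _].
  by congr esum; apply/funext => k; rewrite max_l.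
by rewrite max_r // oppr_le0.
Qed.

End PositiveNegativeParts.

Section DiagonalForm.
Variables (R : realType) (T : choiceType) (l w : T -> R) (a b : R).
Hypothesis w_ge0 : forall k, 0 <= w k.

Lemma diagonal_form_le_neg (g : R) : 0 < g ->
  (forall k, w k != 0 -> g * `|l k - a| <= a + b - l k) ->
  (\esum_(k in [set: T]) (Num.max ((l k - a - b) * w k) 0)%:E
     - \esum_(k in [set: T]) (Num.max (- ((l k - a - b) * w k)) 0)%:E
   <= - g%:E * \esum_(k in [set: T]) (`|l k - a| * w k)%:E)%E.
Proof.
move=> g_gt0 bound.
have weighted k : g * (`|l k - a| * w k) <= - ((l k - a - b) * w k).
  have [->|w_neq0] := eqVneq (w k) 0; first by rewrite !mulr0 oppr0.
  rewrite mulrA -mulNr ler_wpM2r //; have := bound k w_neq0; lra.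
have g_ge0 := ltW g_gt0.
rewrite esum_posneg_nonpos => [|k]; last first.
  by rewrite -oppr_ge0 (le_trans _ (weighted k)) // !mulr_ge0.
rewrite mulNe leeN2 -esum_pZl // => [|k]; last by rewrite lee_fin mulr_ge0.
by apply: le_esum => k _; rewrite -EFinM lee_fin.
Qed.

Lemma diagonal_form_ge (g : R) : 0 < g ->
  (forall k, w k != 0 -> g * `|l k - a| <= l k - a - b) ->
  (g%:E * (\esum_(k in [set: T]) (`|l k - a| * w k)%:E)
   <= \esum_(k in [set: T]) (Num.max ((l k - a - b) * w k) 0)%:E
     - \esum_(k in [set: T]) (Num.max (- ((l k - a - b) * w k)) 0)%:E)%E.
Proof.
move=> g_gt0 bound.
have weighted k : g * (`|l k - a| * w k) <= (l k - a - b) * w k.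
  have [->|w_neq0] := eqVneq (w k) 0; first by rewrite !mulr0.
  by rewrite mulrA ler_wpM2r // bound.
have g_ge0 := ltW g_gt0.
rewrite esum_posneg_nonneg => [|k]; last first.
  by rewrite (le_trans _ (weighted k)) // !mulr_ge0.
rewrite -esum_pZl // => [|k]; last by rewrite lee_fin mulr_ge0.
by apply: le_esum => k _; rewrite -EFinM lee_fin.
Qed.

End DiagonalForm.

Lemma gap_below_bound (R : realFieldType) (a b l : R) :
  0 < a -> a < b -> l < b -> a / b * `|l - a| <= a + b - l.
Proof.
move=> a_gt0 a_lt_b l_lt_b; rewrite mulrAC ler_pdivrMr; last by lra.
by have [l_le_a|a_lt_l] := lerP l a; nra.
Qed.

Lemma gap_above_bound (R : realFieldType) (a b c l : R) :
  0 <= b -> a + b < c -> c <= l -> (c - a - b) / (c - a) * `|l - a| <= l - a - b.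
Proof.
move=> b_ge0 gap c_le_l; rewrite gtr0_norm; last by rewrite subr_gt0; lra.
rewrite mulrAC ler_pdivrMr; last by lra.
nra.
Qed.

Lemma alpha2_ge0 (R : realType) T (rho : R -> R) phi ur ui n m :
  0 <= alpha2 T rho phi ur ui n m.
Proof. by rewrite /alpha2 addr_ge0 // sqr_ge0. Qed.

Theorem lemma4p1 (R : realType) (p q : nat) (rho d g : R -> R)
    (mu : nat -> R) (phi : nat -> R -> R) (a b : R) :
  (0 < p)%N -> (0 < q)%N -> coprime p q ->
  A1 rho d g -> Dirichlet_system rho mu phi ->
  0 < a -> 0 < b ->
  ~ Lambda mu (Tper R p q) a -> ~ Lambda mu (Tper R p q) b ->
  (exists bp, next_point (Lambda mu (Tper R p q)) b bp /\
     rho1 rho d g < a /\ a < bp - b) ->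
  (exists x, a < x < b /\ Lambda mu (Tper R p q) x) ->
  exists g1 g2 : R, 0 < g1 /\ 0 < g2 /\
    (forall ur ui, inE12 mu (Tper R p q) rho phi ur ui a b ->
       (formLab mu (Tper R p q) rho phi ur ui a b
          <= - g1%:E * normE2 mu (Tper R p q) rho phi ur ui a)%E) /\
    (forall ur ui, inE3 mu (Tper R p q) rho phi ur ui a b ->
       (formLab mu (Tper R p q) rho phi ur ui a b
          >= g2%:E * normE2 mu (Tper R p q) rho phi ur ui a)%E).
Proof.
move=> _ _ _ _ _ a_gt0 b_gt0 _ bNL [bp [[_ [_ bp_min]] [_ gap]]].
move=> [x [/andP[a_lt_x x_lt_b] _]].
have a_lt_b : a < b by apply: lt_trans x_lt_b.
set T := Tper R p q.
have lam_neq_b n m : lam mu T n m != b.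
  by apply/eqP => lam_b; apply: bNL; exists n, m.
exists (a / b), ((bp - a - b) / (bp - a)).
split; first exact: divr_gt0.
split; first by apply: divr_gt0; lra.
split=> ur ui [_ alpha_vanish]; rewrite /formLab /normE2.
- apply: (@diagonal_form_le_neg _ _ (fun k => lam mu T k.1 k.2)
           (fun k => alpha2 T rho phi ur ui k.1 k.2)) => [k||[n m] /=].
  + exact: alpha2_ge0.
  + exact: divr_gt0.
  move=> alpha_neq0; apply: gap_below_bound => //.
  rewrite lt_neqAle lam_neq_b leNgt /=.
  by apply: contra alpha_neq0 => /alpha_vanish ->.
- apply: (@diagonal_form_ge _ _ (fun k => lam mu T k.1 k.2)
           (fun k => alpha2 T rho phi ur ui k.1 k.2)) => [k||[n m] /=].
  + exact: alpha2_ge0.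
  + by apply: divr_gt0; lra.
  move=> alpha_neq0; apply: gap_above_bound; [exact: ltW | lra |].
  apply: bp_min; first by exists n, m.
  rewrite lt_neqAle eq_sym lam_neq_b leNgt /=.
  by apply: contra alpha_neq0 => /alpha_vanish ->.
Qed.
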